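(* Let $\Sigma$ be a finite graph and $f$ an integer-valued function on its vertices. Then there exists a finite graph $\Gamma$ containing $\Sigma$ as an induced subgraph (a motif) such that $1$ is an eigenvalue of the normalized Laplacian of $\Gamma$, with an eigenfunction coinciding with $f$ on the vertices of $\Sigma$.
   Context: For a finite simple graph without isolated vertices, write $i\sim j$ for adjacency and $n_i$ for the degree of $i$. The normalized Laplacian acts on real functions $v$ on the vertices by $\Delta v(i)=v(i)-\frac{1}{n_i}\sum_{j\sim i}v(j)$; $\lambda$ is an eigenvalue with eigenfunction $u$ if $u\not\equiv 0$ and $\frac{1}{n_i}\sum_{j\sim i}u(j)=(1-\lambda)u(i)$ for all $i$. For $\lambda=1$ this says $\sum_{j\sim i}u(j)=0$ for every vertex $i$. *)

From mathcomp Require Import all_boot all_order all_algebra.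
From mathcomp Require Import reals.
Set Implicit Arguments. Unset Strict Implicit. Unset Printing Implicit Defensive.
Import Order.TTheory GRing.Theory Num.Theory.
Local Open Scope ring_scope.

Definition simple_graph (T : finType) (e : rel T) : Prop :=
  (forall x y, e x y = e y x) /\ (forall x, ~~ e x x).

Definition no_isolated (T : finType) (e : rel T) : Prop :=
  forall x, exists y, e x y.

Definition degree (T : finType) (e : rel T) (i : T) : nat := #|[set j | e i j]|.

(* lambda is an eigenvalue of the normalized Laplacian with eigenfunction u:
   u not identically zero and (1/n_i) sum_{j ~ i} u(j) = (1 - lambda) u(i). *)
Definition nl_eigenpair (R : realType) (T : finType) (e : rel T)
    (lambda : R) (u : T -> R) : Prop :=
  (exists i, u i != 0) /\
  forall i, (degree e i)%:R^-1 * (\sum_(j | e i j) u j) = (1 - lambda) * u i.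

Definition induced_embedding (S T : finType) (eS : rel S) (eT : rel T)
    (phi : S -> T) : Prop :=
  injective phi /\ forall x y, eT (phi x) (phi y) = eS x y.

From mathcomp Require Import all_boot all_order all_algebra.
From mathcomp Require Import reals.
Set Implicit Arguments. Unset Strict Implicit. Unset Printing Implicit Defensive.
Import GRing.Theory Num.Theory.
Local Open Scope ring_scope.

(* Replace every vertex of a graph H by two non-adjacent twins carrying
   opposite values g and -g.  Every neighbourhood in the doubled graph is a
   union of twin pairs, so the neighbour sums vanish and any g that is not
   identically zero gives an eigenfunction for the eigenvalue 1.  Taking for H
   the graph Sigma plus one extra vertex, with a pendant vertex attached to
   every vertex, and g = f on Sigma, g = 1 on the pendants, the doubled graph
   has no isolated vertex, contains Sigma as an induced subgraph (through one
   of the twins), and its eigenfunction is nonzero even when Sigma is empty. *)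

Lemma induced_embedding_comp (S T U : finType) (eS : rel S) (eT : rel T)
    (eU : rel U) (phi : S -> T) (psi : T -> U) :
  induced_embedding eS eT phi -> induced_embedding eT eU psi ->
  induced_embedding eS eU (psi \o phi).
Proof.
move=> [phi_inj phiE] [psi_inj psiE]; split; first exact: inj_comp.
by move=> x y /=; rewrite psiE phiE.
Qed.

Section OptionGraph.
Variables (T : finType) (e : rel T).

Definition option_rel (a b : option T) : bool :=
  if (a, b) is (Some x, Some y) then e x y else false.

Lemma option_rel_simple : simple_graph e -> simple_graph option_rel.
Proof.
move=> [e_sym e_irr]; split.
  by move=> [x|] [y|] //; rewrite /option_rel e_sym.
by move=> [x|]; rewrite /option_rel ?e_irr.
Qed.

Lemma option_rel_embedding : induced_embedding e option_rel Some.
Proof. by split; [move=> x y [] | ]. Qed.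

End OptionGraph.

Section PendantGraph.
Variables (T : finType) (e : rel T).

(* [(x, true)] is the pendant vertex attached to [(x, false)]. *)
Definition pendant_rel (p q : T * bool) : bool :=
  match p.2, q.2 with
  | false, false => e p.1 q.1
  | true, true => false
  | _, _ => p.1 == q.1
  end.

Lemma pendant_rel_simple : simple_graph e -> simple_graph pendant_rel.
Proof.
move=> [e_sym e_irr]; split.
  by move=> [x [|]] [y [|]]; rewrite /pendant_rel /= ?(e_sym x y) // eq_sym.
by move=> [x [|]]; rewrite /pendant_rel //= e_irr.
Qed.

Lemma pendant_rel_no_isolated : no_isolated pendant_rel.
Proof. by move=> [x b]; exists (x, ~~ b); case: b; rewrite /pendant_rel /=. Qed.

Lemma pendant_rel_embedding : induced_embedding e pendant_rel (fun x => (x, false)).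
Proof. by split; [move=> x y [] | ]. Qed.

End PendantGraph.

Section TwinDoubling.
Variables (T : finType) (e : rel T).

Definition double_rel (p q : T * bool) : bool := e p.1 q.1.

Lemma double_rel_simple : simple_graph e -> simple_graph double_rel.
Proof. by move=> [e_sym e_irr]; split=> [p q|p]; rewrite /double_rel. Qed.

Lemma double_rel_no_isolated : no_isolated e -> no_isolated double_rel.
Proof. by move=> e_noiso [x b]; have [y exy] := e_noiso x; exists (y, b). Qed.

Lemma double_rel_embedding : induced_embedding e double_rel (fun x => (x, true)).
Proof. by split; [move=> x y [] | ]. Qed.

Variable R : realType.

Definition twin_lift (g : T -> R) (p : T * bool) : R :=
  if p.2 then g p.1 else - g p.1.

Lemma double_rel_sum_twin_lift (g : T -> R) (p : T * bool) :
  \sum_(q | double_rel p q) twin_lift g q = 0.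
Proof.
have -> : \sum_(q | double_rel p q) twin_lift g q =
          \sum_(y | e p.1 y) \sum_(c : bool) twin_lift g (y, c).
  by rewrite pair_big_dep /=; apply: eq_big => [[y c]|[y c]] //=; rewrite andbT.
by rewrite big1 // => y _; rewrite big_bool /twin_lift /= subrr.
Qed.

Lemma twin_lift_eigenpair (g : T -> R) :
  (exists x, g x != 0) -> nl_eigenpair double_rel 1 (twin_lift g).
Proof.
move=> [x gx_neq0]; split; first by exists (x, true).
by move=> p; rewrite double_rel_sum_twin_lift subrr !mul0r mulr0.
Qed.

End TwinDoubling.

Theorem theorem7 (R : realType) (S : finType) (eS : rel S) (f : S -> int) :
  simple_graph eS ->
  exists (T : finType) (eT : rel T) (phi : S -> T) (u : T -> R),
    [/\ simple_graph eT, no_isolated eT, induced_embedding eS eT phi,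
        nl_eigenpair eT 1 u & forall x, u (phi x) = (f x)%:~R].
Proof.
move=> eS_simple.
pose H := pendant_rel (option_rel eS).
pose g (p : option S * bool) : R :=
  if p is (Some x, false) then (f x)%:~R else 1.
exists (option S * bool * bool)%type, (double_rel H),
  (fun x => (Some x, false, true)), (twin_lift g); split => //.
- exact/double_rel_simple/pendant_rel_simple/option_rel_simple.
- exact/double_rel_no_isolated/pendant_rel_no_isolated.
- apply: (induced_embedding_comp _ (double_rel_embedding H)).
  exact: (induced_embedding_comp (option_rel_embedding eS) (pendant_rel_embedding _)).
- by apply: twin_lift_eigenpair; exists (None, true); rewrite oner_neq0.
Qed.
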